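(* Let $(E,\rho)$ be a complete partial $v$-generalized metric space and let $S:E\to E$ satisfy $\rho(Su,Sw)\le\lambda[\rho(u,Su)+\rho(w,Sw)]$ for all $u,w\in E$, where $\lambda\in[0,\tfrac12)$. Then $S$ has a unique fixed point $b\in E$, and $\rho(b,b)=0$.
   Context: Let $E$ be a nonempty set and $v\in\mathbb{N}$. $(E,\rho)$, with $\rho:E\times E\to[0,\infty)$, is a partial $v$-generalized metric space if for all $u,w,z_1,\dots,z_v\in E$: (1) $u=w$ iff $\rho(u,u)=\rho(u,w)=\rho(w,w)$; (2) $\rho(u,u)\le\rho(u,w)$; (3) $\rho(u,w)=\rho(w,u)$; (4) $\rho(u,w)\le\rho(u,z_1)+\rho(z_1,z_2)+\dots+\rho(z_{v-1},z_v)+\rho(z_v,w)-\sum_{i=1}^v\rho(z_i,z_i)$. A sequence $\{u_n\}$ in $E$ converges to $u\in E$ if $\lim_{n\to\infty}\rho(u_n,u)=\rho(u,u)$; it is Cauchy if $\lim_{n,m\to\infty}\rho(u_n,u_m)$ exists and is finite. $(E,\rho)$ is complete if for every Cauchy sequence $\{u_n\}$ there is $u\in E$ with $\lim_{n,m\to\infty}\rho(u_n,u_m)=\lim_{n\to\infty}\rho(u_n,u)=\rho(u,u)$. *)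

From Stdlib Require Import Reals Lra.
Open Scope R_scope.

(* Points z_1..z_v of axiom (4) are given by a function z : nat -> E,
   only z 1, ..., z v being used. *)

(* chain sum rho(u,z_1)+rho(z_1,z_2)+...+rho(z_{v-1},z_v)+rho(z_v,w) - sum_{i=1}^v rho(z_i,z_i) *)
Definition chain_bound {E : Type} (rho : E -> E -> R) (v : nat) (u w : E) (z : nat -> E) : R :=
  rho u (z 1%nat)
  + sum_f_R0 (fun i => rho (z (S i)) (z (S (S i)))) (Nat.pred (Nat.pred v))
  + rho (z v) w
  - sum_f_R0 (fun i => rho (z (S i)) (z (S i))) (Nat.pred v).

(* Note: for v = 1 the middle sum must be empty; we handle it separately. *)
Definition chain_bound' {E : Type} (rho : E -> E -> R) (v : nat) (u w : E) (z : nat -> E) : R :=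
  match v with
  | O => rho u w
  | S O => rho u (z 1%nat) + rho (z 1%nat) w - rho (z 1%nat) (z 1%nat)
  | _ => chain_bound rho v u w z
  end.

Definition partial_v_gen_metric {E : Type} (v : nat) (rho : E -> E -> R) : Prop :=
  (forall u w, 0 <= rho u w) /\
  (forall u w, u = w <-> (rho u u = rho u w /\ rho u w = rho w w)) /\
  (forall u w, rho u u <= rho u w) /\
  (forall u w, rho u w = rho w u) /\
  (forall u w (z : nat -> E), rho u w <= chain_bound' rho v u w z).

Definition pconverges {E : Type} (rho : E -> E -> R) (x : nat -> E) (u : E) : Prop :=
  Un_cv (fun n => rho (x n) u) (rho u u).

Definition double_lim {E : Type} (rho : E -> E -> R) (x : nat -> E) (L : R) : Prop :=
  forall eps, eps > 0 -> exists N, forall n m, (n >= N)%nat -> (m >= N)%nat ->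
    Rabs (rho (x n) (x m) - L) < eps.

Definition pCauchy {E : Type} (rho : E -> E -> R) (x : nat -> E) : Prop :=
  exists L : R, double_lim rho x L.

Definition pcomplete {E : Type} (rho : E -> E -> R) : Prop :=
  forall x : nat -> E, pCauchy rho x ->
    exists u : E, double_lim rho x (rho u u) /\ pconverges rho x u.

(* The Picard orbit x_n = S^n x0 of a Kannan map has geometrically decaying
   steps rho(x_n, x_{n+1}) <= k^n rho(x0, S x0) with k = lambda/(1-lambda) < 1,
   and the Kannan inequality bounds rho(x_{n+1}, x_{m+1}) by those steps, so the
   orbit is Cauchy with double limit 0.  Completeness yields u with rho(u,u) = 0
   and rho(x_n, u) -> 0; the generalized triangle inequality through the
   constant chain z_i = x_{n+1} then forces rho(u, S u) = 0, i.e. S u = u.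
   A fixed point c satisfies rho(c,c) <= 2 lambda rho(c,c), hence rho(c,c) = 0,
   and two fixed points are at distance at most lambda (rho(b,b) + rho(c,c)) = 0. *)

From Stdlib Require Import Reals Lra Lia.
Open Scope R_scope.

Lemma Un_cv_geometric_bound (u : nat -> R) (C k : R) :
  0 <= k < 1 -> (forall n, 0 <= u n <= k ^ n * C) -> Un_cv u 0.
Proof.
  intros Hk Hu eps Heps.
  assert (HC : 0 <= C) by (destruct (Hu O) as [H0 H1]; simpl in H1; lra).
  destruct (pow_lt_1_zero k ltac:(rewrite Rabs_right; lra) (eps / (C + 1)))
    as [N HN]; [apply Rdiv_lt_0_compat; lra|].
  exists N; intros n Hn.
  specialize (HN n Hn); specialize (Hu n).
  rewrite Rabs_right in HN by (apply Rle_ge, pow_le; lra).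
  assert (Hpow : k ^ n * (C + 1) < eps).
  { apply (Rmult_lt_compat_r (C + 1)) in HN; [|lra].
    unfold Rdiv in HN; rewrite Rmult_assoc, Rinv_l in HN; lra. }
  assert (k ^ n * C <= k ^ n * (C + 1)) by (apply Rmult_le_compat_l; [apply pow_le|]; lra).
  unfold Rdist; rewrite Rminus_0_r, Rabs_right; lra.
Qed.

Lemma Un_cv_lower_bound (u : nat -> R) (a l : R) :
  (forall n, a <= u n) -> Un_cv u l -> a <= l.
Proof.
  intros Hau Hu; apply (Rle_cv_lim (Un := fun _ => a) Hau); [|exact Hu].
  intros eps Heps; exists O; intros n _; unfold Rdist; rewrite Rminus_diag, Rabs_R0; lra.
Qed.

Lemma double_lim_unique (E : Type) (rho : E -> E -> R) (x : nat -> E) (L1 L2 : R) :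
  double_lim rho x L1 -> double_lim rho x L2 -> L1 = L2.
Proof.
  intros H1 H2; apply cond_eq; intros eps Heps.
  destruct (H1 (eps / 2) ltac:(lra)) as [N1 HN1].
  destruct (H2 (eps / 2) ltac:(lra)) as [N2 HN2].
  set (n := max N1 N2).
  specialize (HN1 n n ltac:(lia) ltac:(lia)); specialize (HN2 n n ltac:(lia) ltac:(lia)).
  rewrite Rabs_minus_sym in HN1.
  replace (L1 - L2) with ((L1 - rho (x n) (x n)) + (rho (x n) (x n) - L2)) by ring.
  pose proof (Rabs_triang (L1 - rho (x n) (x n)) (rho (x n) (x n) - L2)); lra.
Qed.

Section PartialMetric.

Variables (E : Type) (v : nat) (rho : E -> E -> R).
Hypothesis rho_pvgm : partial_v_gen_metric v rho.

Lemma pvgm_ge0 u w : 0 <= rho u w.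
Proof. exact (proj1 rho_pvgm u w). Qed.

Lemma pvgm_sym u w : rho u w = rho w u.
Proof. destruct rho_pvgm as (_ & _ & _ & Hsym & _); apply Hsym. Qed.

Lemma pvgm_dist0_eq u w : rho u w = 0 -> u = w.
Proof.
  destruct rho_pvgm as (Hge0 & Heq & Hself & Hsym & _); intros Huw.
  pose proof (Hge0 u u); pose proof (Hge0 w w).
  pose proof (Hself u w); pose proof (Hself w u); rewrite (Hsym w u) in *.
  apply Heq; lra.
Qed.

(* Axiom (4) along the constant chain z_1 = ... = z_v = a: the v - 1 inner
   terms rho(a,a) cancel against v - 1 of the subtracted self-distances. *)
Lemma pvgm_triangle (v_ge1 : (1 <= v)%nat) u w a :
  rho u w <= rho u a + rho a w - rho a a.
Proof.
  destruct rho_pvgm as (_ & _ & _ & _ & Hchain).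
  specialize (Hchain u w (fun _ => a)).
  destruct v as [|[|v']]; simpl in Hchain; [lia | lra |].
  unfold chain_bound in Hchain; simpl in Hchain.
  rewrite !sum_cte, !S_INR in Hchain; nra.
Qed.

End PartialMetric.

Section Kannan.

Variables (E : Type) (rho : E -> E -> R) (T : E -> E) (lambda : R).
Hypothesis rho_ge0 : forall u w, 0 <= rho u w.
Hypothesis rho_sym : forall u w, rho u w = rho w u.
Hypothesis rho_triangle : forall u w a, rho u w <= rho u a + rho a w - rho a a.
Hypothesis lambda_ge0 : 0 <= lambda.
Hypothesis lambda_lt_half : lambda < 1 / 2.
Hypothesis kannan : forall u w, rho (T u) (T w) <= lambda * (rho u (T u) + rho w (T w)).

Let k := lambda / (1 - lambda).

Lemma kannan_ratio_bounds : 0 <= k < 1.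
Proof.
  unfold k; split.
  - apply Rmult_le_pos; [lra | left; apply Rinv_0_lt_compat; lra].
  - apply (Rmult_lt_reg_r (1 - lambda)); [lra|].
    unfold Rdiv; rewrite Rmult_assoc, Rinv_l; lra.
Qed.

Lemma kannan_step u : rho (T u) (T (T u)) <= k * rho u (T u).
Proof.
  pose proof (kannan u (T u)).
  unfold k; apply (Rmult_le_reg_r (1 - lambda)); [lra|].
  replace (lambda / (1 - lambda) * rho u (T u) * (1 - lambda)) with (lambda * rho u (T u))
    by (field; lra).
  lra.
Qed.

Variable x0 : E.

Definition orbit (n : nat) : E := Nat.iter n T x0.

Lemma orbit_S n : orbit (S n) = T (orbit n).
Proof. reflexivity. Qed.

Lemma orbit_step_le n : rho (orbit n) (orbit (S n)) <= k ^ n * rho x0 (T x0).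
Proof.
  pose proof kannan_ratio_bounds.
  induction n as [|n IH]; [simpl; lra|].
  rewrite !orbit_S in *.
  pose proof (kannan_step (orbit n)).
  assert (k * rho (orbit n) (T (orbit n)) <= k * (k ^ n * rho x0 (T x0)))
    by (apply Rmult_le_compat_l; lra).
  simpl; lra.
Qed.

Lemma orbit_step_cv0 : Un_cv (fun n => rho (orbit n) (orbit (S n))) 0.
Proof.
  apply (Un_cv_geometric_bound _ (rho x0 (T x0)) k kannan_ratio_bounds).
  intro n; split; [apply rho_ge0 | apply orbit_step_le].
Qed.

Lemma orbit_double_lim0 : double_lim rho orbit 0.
Proof.
  intros eps Heps.
  destruct (orbit_step_cv0 eps Heps) as [N HN].
  exists (S N); intros [|n] [|m] Hn Hm; try lia.
  specialize (HN n ltac:(lia)) as Hdn; specialize (HN m ltac:(lia)) as Hdm.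
  unfold Rdist in Hdn, Hdm; rewrite Rminus_0_r, Rabs_right in Hdn, Hdm by apply Rle_ge, rho_ge0.
  rewrite !orbit_S in *.
  pose proof (kannan (orbit n) (orbit m)); pose proof (rho_ge0 (T (orbit n)) (T (orbit m))).
  rewrite Rminus_0_r, Rabs_right by lra.
  nra.
Qed.

(* Triangle through x_{n+1}, then Kannan on rho(x_{n+1}, T u) = rho(T x_n, T u):
   (1 - lambda) rho(u, T u) <= rho(x_{n+1}, u) + rho(x_n, x_{n+1}). *)
Lemma orbit_limit_fixed u : rho u u = 0 -> pconverges rho orbit u -> rho u (T u) = 0.
Proof.
  intros Huu Hconv; unfold pconverges in Hconv; rewrite Huu in Hconv.
  assert (Hshift : Un_cv (fun n => rho (orbit (S n)) u) 0).
  { apply (Un_cv_ext (fun n => rho (orbit (n + 1)) u)); [intro n; now rewrite Nat.add_1_r|].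
    exact (CV_shift' (fun n => rho (orbit n) u) 1 0 Hconv). }
  assert (Hbound : (1 - lambda) * rho u (T u) <= 0 + 0).
  { apply (Un_cv_lower_bound
             (fun n => rho (orbit (S n)) u + rho (orbit n) (orbit (S n))));
      [|exact (CV_plus _ _ _ _ Hshift orbit_step_cv0)].
    intro n.
    pose proof (rho_triangle u (T u) (orbit (S n))).
    pose proof (kannan (orbit n) u).
    pose proof (rho_ge0 (orbit n) (orbit (S n))).
    pose proof (rho_ge0 (orbit (S n)) (orbit (S n))).
    rewrite (rho_sym u (orbit (S n))), !orbit_S in *.
    nra. }
  pose proof (rho_ge0 u (T u)); nra.
Qed.

Lemma kannan_fixpoint_self0 c : T c = c -> rho c c = 0.
Proof.
  intros Hc; pose proof (kannan c c) as Hk; rewrite Hc in Hk.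
  pose proof (rho_ge0 c c); nra.
Qed.

Lemma kannan_fixpoints_dist0 b c : T b = b -> T c = c -> rho c b = 0.
Proof.
  intros Hb Hc; pose proof (kannan c b) as Hk; rewrite Hb, Hc in Hk.
  rewrite (kannan_fixpoint_self0 b Hb), (kannan_fixpoint_self0 c Hc) in Hk.
  pose proof (rho_ge0 c b); lra.
Qed.

End Kannan.

Theorem mainTheorem6 (E : Type) (v : nat) (rho : E -> E -> R) (S : E -> E) (lambda : R) :
  (1 <= v)%nat ->
  inhabited E ->
  partial_v_gen_metric v rho ->
  pcomplete rho ->
  0 <= lambda -> lambda < 1 / 2 ->
  (forall u w, rho (S u) (S w) <= lambda * (rho u (S u) + rho w (S w))) ->
  exists b : E, S b = b /\ rho b b = 0 /\ (forall c : E, S c = c -> c = b).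
Proof.
  intros Hv [x0] Hpm Hcomplete Hl0 Hl1 Hkannan.
  pose proof (pvgm_ge0 _ _ _ Hpm) as Hge0.
  pose proof (orbit_double_lim0 _ _ _ _ Hge0 Hl0 Hl1 Hkannan x0) as Hcauchy.
  destruct (Hcomplete _ (ex_intro _ 0 Hcauchy)) as [u [Hlim Hconv]].
  assert (Huu : rho u u = 0) by exact (double_lim_unique _ _ _ _ _ Hlim Hcauchy).
  assert (Hfix : S u = u).
  { symmetry; apply (pvgm_dist0_eq _ _ _ Hpm).
    exact (orbit_limit_fixed _ _ _ _ Hge0 (pvgm_sym _ _ _ Hpm) (pvgm_triangle _ _ _ Hpm Hv)
             Hl0 Hl1 Hkannan x0 u Huu Hconv). }
  exists u; split; [exact Hfix | split; [exact Huu|]].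
  intros c Hc; apply (pvgm_dist0_eq _ _ _ Hpm).
  exact (kannan_fixpoints_dist0 _ _ _ _ Hge0 Hl1 Hkannan u c Hfix Hc).
Qed.
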